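(* Let $\mathcal{S}$ be a state space, $\mathcal{A}$ a finite action space, $\rho$ a distribution on $\mathcal{S}$, and $r^*:\mathcal{S}\times\mathcal{A}\to\mathbb{R}$ a reward with Bradley–Terry preference model $\mathbb{P}_{r^*}(y=1|s,a,a')=\sigma(r^*(s,a)-r^*(s,a'))$, $\sigma(x)=1/(1+e^{-x})$. Then for any policies $\pi,\tilde\pi$ and any $s\in\mathcal{S}$, $$1-\mathbb{TV}(\pi(\cdot|s)\|\tilde\pi(\cdot|s))\le\min_{\gamma>0}\sqrt{\big(\gamma+2\mathbb{P}_{r^*}(\pi(\cdot|s)\succ\tilde\pi(\cdot|s))\big)\log\frac{1+\gamma}{\gamma}},$$ and $$1-\mathbb{E}_{s\sim\rho}\big[\mathbb{TV}(\pi(\cdot|s)\|\tilde\pi(\cdot|s))\big]\le\min_{\gamma>0}\sqrt{\big(\gamma+2\mathbb{P}_{r^*}(\pi\succ\tilde\pi)\big)\log\frac{1+\gamma}{\gamma}}.$$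
   Context: $\mathbb{TV}(p\|q)=\frac12\sum_a|p(a)-q(a)|$. $\mathbb{P}_{r^*}(\pi(\cdot|s)\succ\tilde\pi(\cdot|s)):=\mathbb{E}_{a\sim\pi(\cdot|s),a'\sim\tilde\pi(\cdot|s)}[\mathbb{P}_{r^*}(y=1|s,a,a')]$ and $\mathbb{P}_{r^*}(\pi\succ\tilde\pi):=\mathbb{E}_{s\sim\rho,a\sim\pi(\cdot|s),a'\sim\tilde\pi(\cdot|s)}[\mathbb{P}_{r^*}(y=1|s,a,a')]$. *)

From HB Require Import structures.
From mathcomp Require Import all_boot all_order all_algebra.
From mathcomp Require Import all_classical all_reals all_analysis.
Set Implicit Arguments. Unset Strict Implicit. Unset Printing Implicit Defensive.
Import Order.TTheory GRing.Theory Num.Theory.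
Local Open Scope ring_scope.
Local Open Scope classical_set_scope.

Definition sigmoid (R : realType) (x : R) : R := (1 + expR (- x))^-1.

Definition BT_prob (R : realType) (S : Type) (A : finType) (r : S -> A -> R)
  (s : S) (a a' : A) : R := sigmoid (r s a - r s a').

Definition is_policy (R : realType) (S : Type) (A : finType) (pi : S -> A -> R) : Prop :=
  forall s, (forall a, 0 <= pi s a) /\ \sum_(a : A) pi s a = 1.

Definition TV (R : realType) (A : finType) (p q : A -> R) : R :=
  2^-1 * \sum_(a : A) `|p a - q a|.

(* P_{r*}(pi(.|s) > pi~(.|s)) = E_{a~pi(.|s), a'~pi~(.|s)} [P(y=1|s,a,a')] *)
Definition pref_state (R : realType) (S : Type) (A : finType) (r : S -> A -> R)
  (pi pi' : S -> A -> R) (s : S) : R :=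
  \sum_(a : A) \sum_(a' : A) pi s a * pi' s a' * BT_prob r s a a'.

Definition pref (d : measure_display) (S : measurableType d) (R : realType)
  (rho : probability S R) (A : finType) (r : S -> A -> R) (pi pi' : S -> A -> R) : R :=
  Rintegral rho setT (pref_state r pi pi').

From HB Require Import structures.
From mathcomp Require Import all_boot all_order all_algebra.
From mathcomp Require Import all_classical all_reals all_analysis.
From mathcomp Require Import ring lra measurable_realfun.
Set Implicit Arguments. Unset Strict Implicit. Unset Printing Implicit Defensive.
Import Order.TTheory GRing.Theory Num.Theory.
Import numFieldNormedType.Exports.
Local Open Scope ring_scope.
Local Open Scope classical_set_scope.

(* With m a := min (p a) (q a), the overlap t := 1 - TV(p, q) is sum_a m a.
   Shrinking p and q to m only lowers the preference, and pairing (a, a')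
   with (a', a), the identity sigmoid x + sigmoid (-x) = 1 gives
   2 P(p > q) >= sum_{a,a'} m a m a' = t^2.  As ln ((1 + g) / g) >= 1 / (1 + g)
   and t <= 1, t^2 <= (g + t^2) / (1 + g) <= (g + 2 P) ln ((1 + g) / g).
   Averaging over states, Jensen's inequality for the square gives
   (E[1 - TV])^2 <= E[(1 - TV)^2] <= 2 E[P]. *)

Section sigmoid.
Variable R : realType.
Implicit Types x : R.

Lemma sigmoid_ge0 x : 0 <= sigmoid x.
Proof. by rewrite /sigmoid invr_ge0 addr_ge0 // expR_ge0. Qed.

Lemma sigmoid_le1 x : sigmoid x <= 1.
Proof. by rewrite /sigmoid invf_le1 ?ler_wpDr ?expR_ge0 // ltr_pwDr ?expR_gt0. Qed.

Lemma sigmoidDN x : sigmoid x + sigmoid (- x) = 1.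
Proof.
rewrite /sigmoid opprK expRN.
have ex_gt0 : 0 < expR x := expR_gt0 x.
by field; rewrite !gt_eqF //; lra.
Qed.

Lemma measurable_sigmoid : measurable_fun setT (@sigmoid R).
Proof.
apply: continuous_measurable_fun => x; rewrite /sigmoid.
apply: (@continuousV R R (fun x => 1 + expR (- x))).
  by rewrite gt_eqF // ltr_pwDl ?expR_gt0.
apply: continuousD; first exact: cst_continuous.
apply: continuous_comp; [exact: continuousN | exact: continuous_expR].
Qed.

End sigmoid.

Section overlap.
Variables (R : realType) (A : finType).

Lemma sum_sigmoid_antisym (m x : A -> R) :
  2 * \sum_a \sum_a' m a * m a' * sigmoid (x a - x a') = (\sum_a m a) ^+ 2.
Proof.
set Q := \sum_a _.
have QE : Q = \sum_a \sum_a' m a * m a' * sigmoid (- (x a - x a')).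
  rewrite /Q exchange_big /=; apply: eq_bigr => a _; apply: eq_bigr => a' _.
  by rewrite opprB (mulrC (m a')).
rewrite mulr2n mulrDl mul1r {1}QE /Q -big_split expr2 mulr_suml /=.
apply: eq_bigr => a _; rewrite -big_split mulr_sumr /=.
by apply: eq_bigr => a' _; rewrite -mulrDr addrC sigmoidDN mulr1.
Qed.

Lemma TV_ge0 (p q : A -> R) : 0 <= TV p q.
Proof. by rewrite mulr_ge0 ?invr_ge0 // sumr_ge0. Qed.

Variables p q : A -> R.
Hypotheses (p_ge0 : forall a, 0 <= p a) (q_ge0 : forall a, 0 <= q a).
Hypotheses (p_sum1 : \sum_a p a = 1) (q_sum1 : \sum_a q a = 1).

Lemma one_subTV_overlap : 1 - TV p q = \sum_a Num.min (p a) (q a).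
Proof.
under eq_bigr do rewrite minr_absE.
by rewrite -mulr_suml sumrB big_split /= p_sum1 q_sum1 /TV; lra.
Qed.

Lemma one_subTV_ge0 : 0 <= 1 - TV p q.
Proof. by rewrite one_subTV_overlap; apply: sumr_ge0 => a _; rewrite le_min p_ge0 q_ge0. Qed.

Lemma one_subTV_le1 : 1 - TV p q <= 1.
Proof.
rewrite one_subTV_overlap -p_sum1 ler_sum // => a _.
by rewrite ge_min lexx.
Qed.

Lemma TV_le1 : TV p q <= 1.
Proof. by have := one_subTV_ge0; rewrite subr_ge0. Qed.

Lemma sqr_one_subTV_le_pref (x : A -> R) :
  (1 - TV p q) ^+ 2 <= 2 * \sum_a \sum_a' p a * q a' * sigmoid (x a - x a').
Proof.
rewrite one_subTV_overlap -(sum_sigmoid_antisym _ x) ler_wpM2l //.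
apply: ler_sum => a _; apply: ler_sum => a' _.
rewrite ler_wpM2r ?sigmoid_ge0 // ler_pM ?le_min ?p_ge0 ?q_ge0 //.
  by rewrite ge_min lexx.
by rewrite ge_min lexx orbT.
Qed.

Lemma pref_ge0 (x : A -> R) :
  0 <= \sum_a \sum_a' p a * q a' * sigmoid (x a - x a').
Proof.
by apply: sumr_ge0 => a _; apply: sumr_ge0 => a' _; rewrite !mulr_ge0 ?sigmoid_ge0.
Qed.

Lemma pref_le1 (x : A -> R) :
  \sum_a \sum_a' p a * q a' * sigmoid (x a - x a') <= 1.
Proof.
rewrite -p_sum1 ler_sum // => a _.
rewrite -[leRHS]mulr1 -q_sum1 mulr_sumr ler_sum // => a' _.
by rewrite ler_piMr ?mulr_ge0 ?sigmoid_le1.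
Qed.

End overlap.

Section log_bound.
Variable R : realType.

Lemma invr1D_le_ln (g : R) : 0 < g -> (1 + g)^-1 <= ln ((1 + g) / g).
Proof.
move=> g_gt0.
have ge_lt1 : -1 < - (1 + g)^-1 by rewrite ltrN2 invf_lt1 //; lra.
have := le_ln1Dx ge_lt1.
have -> : 1 - (1 + g)^-1 = ((1 + g) / g)^-1 by field; rewrite !gt_eqF //; lra.
rewrite lnV ?posrE ?divr_gt0 //; [lra | lra].
Qed.

Lemma le_sqrt_gamma_bound (g t G : R) : 0 < g -> 0 <= t <= 1 -> t ^+ 2 <= G ->
  t <= Num.sqrt ((g + G) * ln ((1 + g) / g)).
Proof.
move=> g_gt0 /andP[t_ge0 t_le1] tG.
have ln_ge := invr1D_le_ln g_gt0.
have t2_le1 : t ^+ 2 <= 1 by rewrite expr_le1.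
have t2_ge0 : 0 <= t ^+ 2 by rewrite sqr_ge0.
have t2_le : t ^+ 2 <= (g + t ^+ 2) / (1 + g).
  by rewrite ler_pdivlMr; [nra | lra].
rewrite -(ger0_norm t_ge0) -sqrtr_sqr ler_wsqrtr // (le_trans t2_le) //.
by rewrite ler_pM // ?invr_ge0; lra.
Qed.

End log_bound.

Section probability_space.
Context d (S : measurableType d) (R : realType) (rho : probability S R).

Lemma Rintegral_prob_cst (c : R) : Rintegral rho setT (fun=> c) = c.
Proof.
have rhoT : fine (rho setT) = 1 by rewrite probability_setT.
by rewrite Rintegral_cst // rhoT mulr1.
Qed.

Lemma bounded01_integrable (f : S -> R) :
  measurable_fun setT f -> (forall s, 0 <= f s <= 1) ->
  rho.-integrable setT (EFin \o f).
Proof.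
move=> mf f01; apply: measurable_bounded_integrable => //.
  by rewrite (le_lt_trans (probability_le1 rho measurableT)) ?ltry.
exists 1; split => // M M_gt1 s _; have /andP[f_ge0 f_le1] := f01 s.
by rewrite /= ger0_norm // (le_trans f_le1) // ltW.
Qed.

(* Integrate the pointwise bound f^2 >= 2 c f - c^2 with c the mean of f. *)
Lemma sqr_Rintegral_le (f g : S -> R) :
  rho.-integrable setT (EFin \o f) -> rho.-integrable setT (EFin \o g) ->
  (forall s, f s ^+ 2 <= g s) ->
  Rintegral rho setT f ^+ 2 <= Rintegral rho setT g.
Proof.
move=> if_ ig fg; set c := Rintegral rho setT f.
have icf : rho.-integrable setT (EFin \o (fun s => 2 * c * f s)).
  exact: (integrableZl measurableT (2 * c) if_).
have ic2 := finite_measure_integrable_cst rho (c ^+ 2) measurableT.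
have lhsE : Rintegral rho setT (fun s => 2 * c * f s - c ^+ 2) = c ^+ 2.
  by rewrite RintegralB // RintegralZl // Rintegral_prob_cst -/c; ring.
rewrite -lhsE le_Rintegral //; first exact: (integrableB measurableT icf ic2).
by move=> s _; have := fg s; have := sqr_ge0 (f s - c); nra.
Qed.

Lemma Rintegral_prob_01 (f : S -> R) :
  rho.-integrable setT (EFin \o f) -> (forall s, 0 <= f s <= 1) ->
  0 <= Rintegral rho setT f <= 1.
Proof.
move=> if_ f01; rewrite Rintegral_ge0 => [|s _]; last by case/andP: (f01 s).
rewrite -[leRHS](Rintegral_prob_cst 1) le_Rintegral //.
  exact: finite_measure_integrable_cst.
by move=> s _; case/andP: (f01 s).
Qed.

End probability_space.

Section measurable_policies.
Context d (S : measurableType d) (R : realType) (A : finType).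
Variables (p q : S -> A -> R).
Hypotheses (mp : forall a, measurable_fun setT (fun s => p s a))
           (mq : forall a, measurable_fun setT (fun s => q s a)).

Lemma measurable_TV : measurable_fun setT (fun s => TV (p s) (q s)).
Proof.
apply: measurable_funM; first exact: measurable_cst.
apply: measurable_sum => a; apply: measurableT_comp; first exact: normr_measurable.
exact: measurable_funB.
Qed.

Lemma measurable_pref_state (r : S -> A -> R) :
  (forall a, measurable_fun setT (fun s => r s a)) ->
  measurable_fun setT (pref_state r p q).
Proof.
move=> mr; apply: measurable_sum => a; apply: measurable_sum => a'.
apply: measurable_funM; first exact: measurable_funM.
apply: measurableT_comp; first exact: measurable_sigmoid.
exact: measurable_funB.
Qed.

End measurable_policies.

Theorem lemmaG2 (d : measure_display) (S : measurableType d) (R : realType)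
  (A : finType) (rho : probability S R) (r : S -> A -> R)
  (pi pit : S -> A -> R) :
  (forall a, measurable_fun setT (fun s => r s a)) ->
  is_policy pi -> is_policy pit ->
  (forall a, measurable_fun setT (fun s => pi s a)) ->
  (forall a, measurable_fun setT (fun s => pit s a)) ->
  (forall s : S, forall gamma : R, 0 < gamma ->
     1 - TV (pi s) (pit s) <=
     Num.sqrt ((gamma + 2 * pref_state r pi pit s) * ln ((1 + gamma) / gamma)))
  /\
  (forall gamma : R, 0 < gamma ->
     1 - Rintegral rho setT (fun s => TV (pi s) (pit s)) <=
     Num.sqrt ((gamma + 2 * pref rho r pi pit) * ln ((1 + gamma) / gamma))).
Proof.
move=> mr hpi hpit mpi mpit.
pose t s := 1 - TV (pi s) (pit s).
have t01 s : 0 <= t s <= 1.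
  by have [? ?] := hpi s; have [? ?] := hpit s; rewrite one_subTV_ge0 ?one_subTV_le1.
have tP s : t s ^+ 2 <= 2 * pref_state r pi pit s.
  by have [? ?] := hpi s; have [? ?] := hpit s; exact: sqr_one_subTV_le_pref.
split => [s g g_gt0 | g g_gt0]; first exact: le_sqrt_gamma_bound g_gt0 (t01 s) (tP s).
have TV01 s : 0 <= TV (pi s) (pit s) <= 1.
  by have [? ?] := hpi s; have [? ?] := hpit s; rewrite TV_ge0 TV_le1.
have P01 s : 0 <= pref_state r pi pit s <= 1.
  by have [? ?] := hpi s; have [? ?] := hpit s; rewrite pref_ge0 ?pref_le1.
have iTV := bounded01_integrable rho (measurable_TV mpi mpit) TV01.
have iP := bounded01_integrable rho (measurable_pref_state mpi mpit mr) P01.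
have i1 := finite_measure_integrable_cst rho 1 measurableT.
have it : rho.-integrable setT (EFin \o t) := integrableB measurableT i1 iTV.
have -> : 1 - Rintegral rho setT (fun s => TV (pi s) (pit s)) = Rintegral rho setT t.
  by rewrite RintegralB ?Rintegral_prob_cst.
apply: le_sqrt_gamma_bound g_gt0 (Rintegral_prob_01 it t01) _.
rewrite /pref -RintegralZl //; apply: sqr_Rintegral_le it _ tP.
exact: (integrableZl measurableT 2 iP).
Qed.
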